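(* Let $G=(V,E)$ be a finite, undirected, unweighted, 2-vertex-connected graph with $n=|V|$ vertices. Suppose $T$ is a minimum spanning tree of $G$ and $C_T$ is a simple cycle in $G$ whose vertex set contains every vertex that has odd degree in $T$. Then $G$ has a TSP tour of length at most $4n/3$.
   Context: A TSP tour of $G$ (graph-TSP, i.e. TSP in the shortest-path metric of $G$) is a closed walk in $G$ that visits every vertex at least once; its length is the number of edges traversed, counted with multiplicity. Since $G$ is unweighted, every spanning tree of $G$ is a minimum spanning tree. The cycle $C_T$ may contain arbitrarily many vertices of even degree in $T$. *)

From mathcomp Require Import all_boot.
Set Implicit Arguments. Unset Strict Implicit. Unset Printing Implicit Defensive.

Section Graphs.
Variable V : finType.

Definition simple_graph (e : rel V) : Prop := symmetric e /\ irreflexive e.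

Definition connected_graph (e : rel V) : Prop := forall x y : V, connect e x y.

Definition del_vertex (e : rel V) (v : V) : rel V :=
  [rel a b | [&& e a b, a != v & b != v]].

Definition two_vertex_connected (e : rel V) : Prop :=
  2 < #|V| /\ connected_graph e /\
  forall v x y : V, x != v -> y != v -> connect (del_vertex e v) x y.

Definition simple_cycle (e : rel V) (c : seq V) : Prop :=
  [/\ 2 < size c, uniq c & cycle e c].

Definition spanning_tree (e t : rel V) : Prop :=
  [/\ symmetric t, subrel t e, connected_graph t &
      forall c : seq V, ~ simple_cycle t c].

(* minimum spanning tree of the unweighted graph e: a spanning tree with the
   minimum number of edges (all spanning trees have the same weight) *)
Definition tree_weight (t : rel V) : nat := #|[set p : V * V | t p.1 p.2]|.

Definition min_spanning_tree (e t : rel V) : Prop :=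
  spanning_tree e t /\
  forall t' : rel V, spanning_tree e t' -> tree_weight t <= tree_weight t'.

Definition degree (t : rel V) (x : V) : nat := #|[set y | t x y]|.

(* a TSP tour (graph-TSP): a closed walk x0 :: w in e (ending at x0) visiting
   every vertex; its length is the number of edges traversed, size w *)
Definition tsp_tour (e : rel V) (x0 : V) (w : seq V) : Prop :=
  [/\ path e x0 w, last x0 w = x0 & forall v : V, v \in x0 :: w].

End Graphs.

From mathcomp Require Import all_boot zify.
Set Implicit Arguments. Unset Strict Implicit. Unset Printing Implicit Defensive.

(* Let k be the length of the cycle C and n = |V|.  Walking around C and
   reaching each of the n - k remaining vertices by a detour out and back along
   an edge leaving the visited set gives a tour of length at most 2n - k.
   Alternatively, give the edges of C a bit that starts anywhere and flips at
   every vertex of odd degree in T; either bit class makes all degrees of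
   T + class even, and the smaller class has at most k/2 edges, so T plus it has
   an Euler tour of length at most n - 1 + k/2.  The minimum of the two bounds
   is at most 4n/3. *)

Section Detours.
Variable V : finType.
Variable e : rel V.
Hypothesis e_sym : symmetric e.
Hypothesis e_conn : connected_graph e.

Lemma path_exit (S : pred V) x p : path e x p -> S x -> ~~ S (last x p) ->
  exists y u, [/\ S y, ~~ S u & e y u].
Proof.
elim: p x => [|z p IH] x /=; first by move=> _ ->.
case/andP=> exz pz Sx nS.
case Sz: (S z); first exact: IH pz Sz nS.
by exists x, z; rewrite Sz.
Qed.

Lemma closed_walk_detour x0 w v : path e x0 w -> last x0 w = x0 -> v \notin x0 :: w ->
  exists w', [/\ path e x0 w', last x0 w' = x0, size w' = (size w).+2 &
     #|[predC x0 :: w']| < #|[predC x0 :: w]|].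
Proof.
move=> pw lw vw; have /connectP [p pp lp] := e_conn x0 v.
have [y [u [yw uw eyu]]] : exists y u, [/\ y \in x0 :: w, u \notin x0 :: w & e y u].
  by apply: (path_exit pp); rewrite ?mem_head -?lp.
case/splitPl: yw pw lw uw => w1 w2 ly; rewrite cat_path last_cat => /andP [p1 p2] lw uw.
exists (w1 ++ u :: y :: w2); split.
- by rewrite cat_path p1 /= ly eyu e_sym eyu -ly p2.
- by rewrite last_cat /= -ly.
- by rewrite !size_cat /= !addnS.
apply: proper_card; apply/properP; split.
  apply/subsetP => z; rewrite !inE !mem_cat !in_cons.
  by apply: contra => /or3P [] ->; rewrite ?orbT.
by exists u; move: uw; rewrite !inE ?mem_cat ?inE ?eqxx ?orbT.
Qed.

Lemma closed_walk_cover x0 w : path e x0 w -> last x0 w = x0 ->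
  exists w', [/\ path e x0 w', last x0 w' = x0, (forall v, v \in x0 :: w')
     & size w' <= size w + 2 * #|[predC x0 :: w]|].
Proof.
have [m] := ubnP #|[predC x0 :: w]|; elim: m w => // m IH w hm pw lw.
case: (pickP [predC x0 :: w]) => [v vw | w_all].
  have [w' [pw' lw' sw' lt_w']] := closed_walk_detour pw lw vw.
  have [w'' [pw'' lw'' cover sw'']] := IH w' (leq_trans lt_w' hm) pw' lw'.
  by exists w''; split => //; lia.
exists w; split => // [v|]; last exact: leq_addr.
by move: (w_all v); rewrite !inE => /negbFE.
Qed.

Lemma cycle_tour c : simple_cycle e c ->
  exists x0 w, tsp_tour e x0 w /\ size w + size c <= 2 * #|V|.
Proof.
case: c => [|x0 r] [// _ ur pc]; have lc : last x0 (rcons r x0) = x0 by rewrite last_rcons.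
have [w [pw lw cover sw]] := closed_walk_cover pc lc.
exists x0, w; split => //.
have <- : #|x0 :: r| + #|[predC x0 :: rcons r x0]| = #|V|.
  rewrite -(cardC (mem (x0 :: r))); congr (_ + _).
  by apply: eq_card => v; rewrite !inE mem_rcons in_cons; case: (v == x0).
move: sw; rewrite size_rcons (card_uniqP ur) /=; lia.
Qed.

End Detours.

Section WalkSystems.
Variable V : finType.
Variable e : rel V.
Hypothesis e_sym : symmetric e.

(* A list of walks stands for the multigraph of their edges.  [end_degree L v]
   counts the walk endpoints at [v] (a closed walk counts its base twice); it
   has the parity of the degree of [v] in that multigraph. *)
Definition walk := (V * seq V)%type.
Definition wlast (w : walk) := last w.1 w.2.
Definition wverts (w : walk) := w.1 :: w.2.
Definition wpath (w : walk) := path e w.1 w.2.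
Definition wends (w : walk) (v : V) := (v == w.1) + (v == wlast w).
Definition end_degree (L : seq walk) v := sumn [seq wends w v | w <- L].
Definition covered (L : seq walk) v := has (fun w => v \in wverts w) L.
Definition linked (L : seq walk) x y :=
  has (fun w => (x \in wverts w) && (y \in wverts w)) L.
Definition total_length (L : seq walk) := sumn [seq size w.2 | w <- L].
Definition connected_walks L :=
  forall x y, covered L x -> covered L y -> connect (linked L) x y.

Lemma end_degree_cat L1 L2 v :
  end_degree (L1 ++ L2) v = end_degree L1 v + end_degree L2 v.
Proof. by rewrite /end_degree map_cat sumn_cat. Qed.

Lemma total_length_cat L1 L2 :
  total_length (L1 ++ L2) = total_length L1 + total_length L2.
Proof. by rewrite /total_length map_cat sumn_cat. Qed.

Lemma sum_end_degree L : \sum_v end_degree L v = 2 * size L.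
Proof.
have sum_eq1 a : \sum_(v : V) (v == a : nat) = 1.
  by rewrite (bigD1 a) //= eqxx big1 // => v /negbTE ->.
elim: L => [|w L IH]; first by rewrite big1.
rewrite /end_degree /=; under eq_bigr do rewrite -/(end_degree L _).
by rewrite big_split /= IH big_split /= !sum_eq1 mulnS.
Qed.

Lemma end_degree_even_at x0 L :
  (forall v, v != x0 -> ~~ odd (end_degree L v)) -> ~~ odd (end_degree L x0).
Proof.
move=> even_v; have := congr1 odd (sum_end_degree L).
rewrite (bigD1 x0) //= oddD oddM andFb.
suff -> : odd (\sum_(v | v != x0) end_degree L v) = false by rewrite addbF => ->.
elim/big_ind: _ => // [a b oa ob|v /even_v /negbTE //].
by rewrite oddD oa ob.
Qed.

Lemma end_degree_pos L v : 0 < end_degree L v -> exists2 w, w \in L & 0 < wends w v.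
Proof.
elim: L => [|w L IH] //; rewrite /end_degree /= -/(end_degree L v).
case: (posnP (wends w v)) => [-> /IH [w' w'L pos]|pos _].
  by exists w'; rewrite // in_cons w'L orbT.
by exists w; rewrite ?mem_head.
Qed.

Definition wrev (w : walk) : walk := (wlast w, rev (belast w.1 w.2)).

Lemma wlast_rev w : wlast (wrev w) = w.1.
Proof. by case: w => x [|y p] //=; rewrite /wlast /= rev_cons last_rcons. Qed.

Lemma wverts_rev w : wverts (wrev w) =i wverts w.
Proof.
by case: w => x p v; rewrite /wverts /wlast /= [in RHS]lastI mem_rcons !in_cons mem_rev.
Qed.

Lemma wpath_rev w : wpath w -> wpath (wrev w).
Proof.
by case: w => x p; rewrite /wpath /wlast /= rev_path; apply: sub_path => a b; rewrite e_sym.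
Qed.

Lemma wends_rev w v : wends (wrev w) v = wends w v.
Proof. by rewrite /wends wlast_rev addnC. Qed.

Lemma size_wrev w : size (wrev w).2 = size w.2.
Proof. by rewrite size_rev size_belast. Qed.

(* [M] traverses the edges of [W1] and [W2] once each. *)
Definition merged (W1 W2 M : walk) :=
  [/\ wpath M, wverts M =i [predU wverts W1 & wverts W2],
      size M.2 = size W1.2 + size W2.2 &
      forall v, odd (wends M v) = odd (wends W1 v + wends W2 v)].

Lemma merged_rev W1 W2 M : merged W1 (wrev W2) M -> merged W1 W2 M.
Proof.
case=> pM vM sM eM; split=> // [v||v].
- by rewrite vM -!topredE /= wverts_rev.
- by rewrite sM size_wrev.
- by rewrite eM wends_rev.
Qed.

Lemma merged_cat W1 W2 : wpath W1 -> wpath W2 -> wlast W1 = W2.1 ->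
  merged W1 W2 (W1.1, W1.2 ++ W2.2).
Proof.
case: W1 W2 => a s [b s2]; rewrite /wpath /wlast /= => ps ps2 lb; split => [|||v].
- by rewrite /wpath /= cat_path ps lb.
- move=> v; rewrite !inE /= mem_cat -lb.
  case: (eqVneq v (last a s)) => [->|_]; last by rewrite orbA.
  by move: (mem_last a s); rewrite in_cons => /orP [->|->]; rewrite ?orbT.
- by rewrite size_cat.
- rewrite /wends /wlast /= last_cat lb !oddD.
  by case: (v == a); case: (v == b); case: (v == last b s2).
Qed.

Lemma merged_open W1 W2 : wpath W1 -> wpath W2 -> 0 < wends W2 (wlast W1) ->
  exists M, merged W1 W2 M.
Proof.
move=> p1 p2; case: (eqVneq (wlast W1) W2.1) => [h _|ne].
  by exists (W1.1, W1.2 ++ W2.2); apply: merged_cat.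
rewrite /wends (negbTE ne) add0n lt0b => /eqP h.
exists (W1.1, W1.2 ++ (wrev W2).2); apply/merged_rev/merged_cat => //.
exact: wpath_rev.
Qed.

(* Rotate the closed walk [W1] to start at a common vertex and insert it there
   into [W2]. *)
Lemma merged_splice W1 W2 x : wpath W1 -> wlast W1 = W1.1 -> wpath W2 ->
  x \in wverts W1 -> x \in wverts W2 -> exists M, merged W1 W2 M.
Proof.
case: W1 W2 => a s [b s2]; rewrite /wpath /wlast /wverts /= => ps ls ps2 xs xs2.
case/splitPl: xs ls ps => p1 p2 lp1; rewrite last_cat lp1 cat_path lp1 => lp2 /andP [pp1 pp2].
case/splitPl: xs2 ps2 => q1 q2 lq1; rewrite cat_path lq1 => /andP [pq1 pq2].
have lp21 : last x (p2 ++ p1) = x by rewrite last_cat lp2 lp1.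
exists (b, q1 ++ (p2 ++ p1) ++ q2); split.
- by rewrite /wpath /= !cat_path pq1 lq1 pp2 lp2 pp1 lp21 pq2.
- have xM : x \in b :: q1 ++ (p2 ++ p1) ++ q2.
    by move: (mem_last b q1); rewrite lq1 !inE !mem_cat => /orP [->|->]; rewrite ?orbT.
  have aM : a \in b :: q1 ++ (p2 ++ p1) ++ q2.
    move: (mem_last x p2); rewrite lp2 in_cons => /orP [/eqP -> //|ap2].
    by rewrite !inE !mem_cat ap2 !orbT.
  move=> v; case: (eqVneq v a) => [->|va]; first by rewrite aM !inE eqxx.
  rewrite !inE /= !mem_cat (negbTE va) /=.
  by case: (v == b); case: (v \in q1); case: (v \in p1); case: (v \in p2); case: (v \in q2).
- rewrite /= !size_cat; lia.
- move=> v; rewrite /wends /wlast /= !last_cat lq1 lp2 lp1 lp2 !oddD.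
  by case: (v == a); case: (v == b).
Qed.

Section MergeStep.
Variables (W1 W2 M : walk) (L : seq walk).
Hypotheses (W2L : W2 \in L) (W12M : merged W1 W2 M).

Let perm_L : perm_eq L (W2 :: rem W2 L) := perm_to_rem W2L.

Lemma merged_wpath : all wpath (W1 :: L) -> all wpath (M :: rem W2 L).
Proof.
case: W12M => pM _ _ _; rewrite /= (perm_all _ perm_L) /= => /and3P [_ _ ->].
by rewrite pM.
Qed.

Lemma merged_end_degree v :
  odd (end_degree (M :: rem W2 L) v) = odd (end_degree (W1 :: L) v).
Proof.
case: W12M => _ _ _ /(_ v) eM.
rewrite /end_degree /= (perm_sumn (perm_map _ perm_L)) /= addnA.
by rewrite oddD eM -oddD.
Qed.

Lemma merged_covered v : covered (M :: rem W2 L) v = covered (W1 :: L) v.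
Proof.
case: W12M => _ vM _ _.
by rewrite /covered /= (eq_has_r (perm_mem perm_L)) /= vM !inE !orbA.
Qed.

Lemma merged_linked x y : linked (W1 :: L) x y -> linked (M :: rem W2 L) x y.
Proof.
case: W12M => _ vM _ _; rewrite /linked /= (eq_has_r (perm_mem perm_L)) /= !vM.
by case/or3P => [|| ->]; rewrite ?orbT // => /andP [xW yW];
   move: xW yW; rewrite !inE => -> ->; rewrite ?orbT.
Qed.

Lemma merged_total_length : total_length (M :: rem W2 L) = total_length (W1 :: L).
Proof.
case: W12M => _ _ sM _.
by rewrite /total_length /= (perm_sumn (perm_map _ perm_L)) /= sM addnA.
Qed.

End MergeStep.

Lemma closed_walk_meets W1 L : L != [::] -> connected_walks (W1 :: L) ->
  exists2 W2, W2 \in L & exists2 x, x \in wverts W1 & x \in wverts W2.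
Proof.
case: L => // W3 L _ conn.
case: (boolP (has (fun W => has (fun x => x \in wverts W1) (wverts W)) (W3 :: L))) =>
  [/hasP [W2 W2L /hasP [x xW2 xW1]]|no_meet]; first by exists W2 => //; exists x.
have closedW1 : closed (linked (W1 :: W3 :: L)) (wverts W1).
  move=> a b /hasP [W]; rewrite in_cons => /orP [/eqP -> /andP [-> ->] //|WL].
  case/andP=> aW bW; have /hasPn W_out := hasPn no_meet W WL.
  by move: (W_out a aW) (W_out b bW); rewrite !inE => /negbTE -> /negbTE ->.
have c1 : covered (W1 :: W3 :: L) W1.1 by rewrite /covered /= mem_head.
have c3 : covered (W1 :: W3 :: L) W3.1 by rewrite /covered /= mem_head orbT.
have := closed_connect closedW1 (conn _ _ c1 c3).
rewrite mem_head => /esym W3W1.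
by move/hasPn: no_meet => /(_ W3 (mem_head _ _)) /hasPn /(_ W3.1 (mem_head _ _)); rewrite W3W1.
Qed.

Lemma merge_partner W1 L : L != [::] -> all wpath (W1 :: L) ->
  (forall v, ~~ odd (end_degree (W1 :: L) v)) -> connected_walks (W1 :: L) ->
  exists W2 M, W2 \in L /\ merged W1 W2 M.
Proof.
move=> L0 /= /andP [p1 /allP pL] even conn.
case: (eqVneq (wlast W1) W1.1) => [closed|open].
  have [W2 W2L [x x1 x2]] := closed_walk_meets L0 conn.
  have [M ?] := merged_splice p1 closed (pL _ W2L) x1 x2.
  by exists W2, M.
(* the walk endpoint at [wlast W1] is matched by an endpoint of another walk *)
have [W2 W2L pos] : exists2 W2, W2 \in L & 0 < wends W2 (wlast W1).
  apply: end_degree_pos; move: (even (wlast W1)).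
  rewrite /end_degree /= -/(end_degree L _) /wends eqxx (negbTE open).
  by case: (end_degree L _).
have [M ?] := merged_open p1 (pL _ W2L) pos.
by exists W2, M.
Qed.

Lemma euler_closed_walk L : L != [::] -> all wpath L ->
  (forall v, ~~ odd (end_degree L v)) -> connected_walks L ->
  exists x0 w, [/\ path e x0 w, last x0 w = x0, size w = total_length L &
     forall v, covered L v -> v \in x0 :: w].
Proof.
have [n] := ubnP (size L); elim: n L => // n IH [//|W1 L] sizeL _.
have [->|L0] := eqVneq L [::] => pL even conn.
  have closed : wlast W1 = W1.1.
    by apply/eqP; move: (even W1.1); rewrite /end_degree /= /wends eqxx eq_sym; case: eqP.
  exists W1.1, W1.2; split => //; first by case/andP: pL.
    by rewrite /total_length /= addn0.
  by move=> v; rewrite /covered /= orbF.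
have [W2 [M [W2L W12M]]] := merge_partner L0 pL even conn.
have [|||x0 [w [pw lw sw cover]]] := IH (M :: rem W2 L) _ isT (merged_wpath W2L W12M pL).
- by rewrite /= size_rem // prednK // lt0n size_eq0.
- by move=> v; rewrite (merged_end_degree W2L W12M) (negbTE (even v)).
- move=> x y; rewrite !(merged_covered W2L W12M) => cx cy.
  by apply: connect_sub (conn x y cx cy) => a b /(merged_linked W2L W12M)/connect1.
exists x0, w; split => //; first by rewrite sw (merged_total_length W2L W12M).
by move=> v; rewrite -(merged_covered W2L W12M) => /cover.
Qed.

End WalkSystems.

Section FlipEdges.
Variable V : finType.
Variable e : rel V.
Variable d : pred V.

Fixpoint flip_edges (b : bool) (x : V) (p : seq V) : seq (walk V) :=
  if p is y :: p' then
    if b then (x, [:: y]) :: flip_edges (b (+) d y) y p' else flip_edges (b (+) d y) y p'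
  else [::].

Lemma size_flip_edgesC b x p :
  size (flip_edges b x p) + size (flip_edges (~~ b) x p) = size p.
Proof.
elim: p b x => [|y p IH] b x //=; rewrite addNb.
by case: b; rewrite /= ?addSn ?addnS IH.
Qed.

Lemma flip_edges_wpath b x p : path e x p -> all (wpath e) (flip_edges b x p).
Proof.
elim: p b x => [|y p IH] b x //= /andP [exy pp].
by case: b => /=; rewrite ?IH // /wpath /= exy.
Qed.

Lemma total_length_flip_edges b x p :
  total_length (flip_edges b x p) = size (flip_edges b x p).
Proof.
by elim: p b x => [|y p IH] [] x //=; rewrite /total_length /= -/(total_length _) IH.
Qed.

Lemma end_degree_flip_edges_out b x p v :
  v \notin x :: p -> end_degree (flip_edges b x p) v = 0.
Proof.
elim: p b x => [|y p IH] b x //; rewrite !in_cons !negb_or => /and3P [vx vy vp].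
have vyp : v \notin y :: p by rewrite in_cons negb_or vy vp.
case: b => /=; last exact: IH.
by rewrite /end_degree /= -/(end_degree _ _) IH // /wends /wlast /= (negbTE vx) (negbTE vy).
Qed.

Lemma end_degree_flip_edges_head b x p :
  x \notin p -> end_degree (flip_edges b x p) x = b && (p != [::]).
Proof.
case: p => [|y p] xp; first by rewrite andbF.
have xyp : x \in y :: p = false by apply/negbTE.
rewrite in_cons negb_or in xp; case/andP: xp => xy xp.
case: b => /=; rewrite ?/end_degree /= -?/(end_degree _ _) end_degree_flip_edges_out ?xyp //.
by rewrite /wends /wlast /= eqxx (negbTE xy).
Qed.

(* An inner vertex [y] of the path receives the edge into [y] iff the bit before
   [y] is set and the edge out of [y] iff the bit after [y] is set; the two bits
   differ exactly when [d y]. *)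
Lemma odd_end_degree_flip_edges b x p v :
  v \in p -> count_mem v p = 1 -> v != x -> v != last x p ->
  odd (end_degree (flip_edges b x p) v) = d v.
Proof.
elim: p b x => [|y p IH] b x //; case: (eqVneq v y) => [-> _|vy].
  rewrite /= eqxx add1n => -[/count_memPn yp] yx; case: p IH yp => [|z p] _ yp.
    by rewrite /= eqxx.
  move=> _; have := end_degree_flip_edges_head (b (+) d y) yp.
  case: b => /=; rewrite ?/end_degree /= -?/(end_degree _ _) => ->.
    by rewrite /wends /wlast /= eqxx (negbTE yx) /=; case: (d y).
  by case: (d y).
rewrite in_cons (negbTE vy) /= eq_sym (negbTE vy) add0n => vp cnt vx vl.
case: b; last exact: IH.
rewrite /end_degree /= -/(end_degree _ _) oddD IH //.
by rewrite /wends /wlast /= (negbTE vx) (negbTE vy).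
Qed.

Lemma cycle_flip_edges x0 r : path e x0 (rcons r x0) -> uniq (x0 :: r) ->
  {subset d <= x0 :: r} ->
  exists J, [/\ all (wpath e) J, total_length J = size J, 2 * size J <= size (x0 :: r)
     & forall v, v != x0 -> odd (end_degree J v) = d v].
Proof.
move=> pc ur d_c; pose J b := flip_edges b x0 (rcons r x0).
have [b szJ] : exists b, 2 * size (J b) <= size (x0 :: r).
  have := size_flip_edgesC true x0 (rcons r x0); rewrite size_rcons /= -/(J true) -/(J false).
  case: (leqP (2 * size (J true)) (size r).+1) => [le|gt]; first by exists true.
  by exists false; lia.
exists (J b); split => //; first exact: flip_edges_wpath.
  exact: total_length_flip_edges.
move=> v vx0; case: (boolP (v \in r)) => vr.
  apply: odd_end_degree_flip_edges; rewrite ?mem_rcons ?in_cons ?vr ?orbT ?last_rcons //.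
  case/andP: ur => _ ur; rewrite -cats1 count_cat (count_uniq_mem _ ur) vr /=.
  by rewrite eq_sym (negbTE vx0).
have vc : v \notin x0 :: r by rewrite in_cons negb_or vx0.
rewrite end_degree_flip_edges_out; last by rewrite in_cons mem_rcons negb_or vx0.
by apply/esym/negbTE; apply: contra vc; apply: d_c.
Qed.

End FlipEdges.

Section Forest.
Variable V : finType.
Variable t : rel V.
Hypotheses (t_sym : symmetric t) (t_irr : irreflexive t).
Hypothesis t_acyclic : forall c, ~ simple_cycle t c.

Definition nbrs (U : {set V}) x := [set y in U | t x y].

Lemma path_no_chord x p y :
  uniq (x :: p) -> path t x p -> y \in p -> y != head x p -> ~~ t x y.
Proof.
move=> u pp yp hy; apply/negP => txy.
case/splitPr: yp u pp hy => p1 p2 u pp hy.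
apply: (t_acyclic (c := x :: rcons p1 y)); split.
- by case: p1 hy {u pp} => [|z p1] /=; rewrite ?eqxx // size_rcons.
- apply: subseq_uniq u; rewrite -cats1 -[y :: p2]cat1s catA -cat_cons.
  exact: prefix_subseq.
- rewrite /cycle !rcons_path; move: pp; rewrite cat_path /= => /and3P [-> -> _] /=.
  by rewrite last_rcons t_sym.
Qed.

Lemma nbr_on_path x p y :
  uniq (x :: p) -> path t x p -> t x y -> y \in x :: p -> y = head x p.
Proof.
move=> u pp txy; rewrite in_cons => /orP [/eqP yx|yp].
  by move: txy; rewrite yx t_irr.
by apply/eqP; apply: contraTT txy; exact: path_no_chord.
Qed.

(* A longest path in [U] ends at a vertex with at most one neighbour in [U]. *)
Lemma forest_leaf (U : {set V}) : U != set0 -> exists2 l, l \in U & #|nbrs U l| <= 1.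
Proof.
case/set0Pn => x0 x0U.
case: (boolP [exists l in U, #|nbrs U l| <= 1]) => [/exists_inP [l] | ]; first by exists l.
rewrite negb_exists_in => /forall_inP deg2; exfalso.
suff no_path x p : uniq (x :: p) -> path t x p -> {subset x :: p <= U} -> False.
  by apply: (no_path x0 [::]) => // z; rewrite inE => /eqP ->.
have [n] := ubnP (#|V| - size (x :: p)); elim: n x p => // n IH x p sz u pp sub.
have /card_gt1P [y1 [y2 [y1U y2U y12]]] : 1 < #|nbrs U x|.
  by rewrite ltnNge; apply: deg2; apply: sub; rewrite mem_head.
move: y1U y2U; rewrite !inE => /andP [y1U txy1] /andP [y2U txy2].
have [y [yU txy yp]] : exists y, [/\ y \in U, t x y & y \notin x :: p].
  case: (boolP (y1 \in x :: p)) => [y1p|]; last by exists y1.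
  case: (boolP (y2 \in x :: p)) => [y2p|]; last by exists y2.
  by move: y12; rewrite (nbr_on_path u pp txy1 y1p) (nbr_on_path u pp txy2 y2p) eqxx.
have uy : uniq (y :: x :: p) by rewrite /= yp.
apply: (IH y (x :: p)) => //.
- have := max_card (mem (y :: x :: p)); rewrite (card_uniqP uy) => lt_pV.
  by rewrite /= -ltnS; apply: leq_trans sz; rewrite ltnS subnSK.
- by rewrite /= t_sym txy pp.
- by move=> z; rewrite in_cons => /orP [/eqP ->|/sub].
Qed.

Lemma sum_nbrs_setD1 (U : {set V}) l : l \in U ->
  \sum_(x in U) #|nbrs U x| = \sum_(x in U :\ l) #|nbrs (U :\ l) x| + 2 * #|nbrs U l|.
Proof.
move=> lU; rewrite (bigD1 l) //= addnC.
rewrite (eq_bigr (fun x => #|nbrs (U :\ l) x| + t x l)) => [|x /andP [xU xl]]; last first.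
  rewrite (cardsD1 l (nbrs U x)) !inE lU /= addnC; congr (_ + _).
  by apply: eq_card => y; rewrite !inE; case: (y == l).
rewrite big_split /= (eq_bigl (mem (U :\ l))) => [|x]; last by rewrite !inE andbC.
have -> : \sum_(x in U | x != l) (t x l : nat) = #|nbrs U l|.
  rewrite -big_mkcondr /= sum1dep_card; apply: eq_card => y; rewrite !inE.
  case: (eqVneq y l) => [->|yl]; first by rewrite t_irr !andbF.
  by rewrite andbT t_sym.
by rewrite -addnA addnn -mul2n.
Qed.

Lemma forest_nbrs_sum (U : {set V}) :
  U != set0 -> \sum_(x in U) #|nbrs U x| + 2 <= 2 * #|U|.
Proof.
have [n] := ubnP #|U|; elim: n U => // n IH U sz U0.
have [l lU leaf] := forest_leaf U0; rewrite (sum_nbrs_setD1 lU) (cardsD1 l U) lU.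
have [U1|U1] := eqVneq (U :\ l) set0.
  suff -> : nbrs U l = set0 by rewrite U1 big_set0 cards0.
  apply/setP => y; rewrite !inE; case: (eqVneq y l) => [->|yl]; first by rewrite t_irr andbF.
  by move/setP: U1 => /(_ y); rewrite !inE yl /= => ->.
have := IH _ _ U1; rewrite (cardsD1 l U) lU in sz; lia.
Qed.

End Forest.

Section EdgeWalks.
Variable V : finType.
Variables e t : rel V.
Hypotheses (t_sub : subrel t e) (t_sym : symmetric t) (t_irr : irreflexive t).

(* Orienting by [enum_rank] lists every edge of [t] exactly once. *)
Definition oriented_edge (p : V * V) := t p.1 p.2 && (enum_rank p.1 < enum_rank p.2).
Definition edge_walks : seq (walk V) := [seq (p.1, [:: p.2]) | p <- enum oriented_edge].

Lemma oriented_edgeP x y : t x y -> oriented_edge (x, y) || oriented_edge (y, x).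
Proof.
move=> txy; rewrite /oriented_edge /= txy t_sym txy /=.
case: ltngtP => // /val_inj/enum_rank_inj yx.
by move: txy; rewrite yx t_irr.
Qed.

Lemma edge_walks_wpath : all (wpath e) edge_walks.
Proof.
apply/allP => w /mapP [p]; rewrite mem_enum => /andP [tp _] ->.
by rewrite /wpath /= t_sub.
Qed.

Lemma total_length_edge_walks : total_length edge_walks = size edge_walks.
Proof. by rewrite /total_length /edge_walks -map_comp; elim: (enum _) => //= p s ->. Qed.

Lemma linked_edge_walks x y : t x y -> linked edge_walks x y.
Proof.
move=> /oriented_edgeP /orP [xy|yx]; apply/hasP.
  exists (x, [:: y]); last by rewrite !inE !eqxx orbT.
  by apply/mapP; exists (x, y); rewrite ?mem_enum.
exists (y, [:: x]); last by rewrite !inE !eqxx orbT.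
by apply/mapP; exists (y, x); rewrite ?mem_enum.
Qed.

Lemma sum_pair_endpoints (E : rel V) v :
  \sum_(p : V * V | E p.1 p.2) ((v == p.1) + (v == p.2)) = \sum_y (E v y + E y v).
Proof.
rewrite -(pair_big_dep xpredT E (fun x y => (v == x) + (v == y))) /=.
under eq_bigr do rewrite big_split /=.
rewrite big_split /= [X in X + _](bigD1 v) //= [X in _ + X + _]big1 => [|x xv]; last first.
  by apply: big1 => y _; rewrite eq_sym (negbTE xv).
rewrite addn0 big_split /=; congr (_ + _).
  by rewrite big_mkcond eqxx.
apply: eq_bigr => x _; rewrite big_mkcond (bigD1 v) //= big1 => [|y yv].
  by rewrite eqxx addn0; case: (E x v).
by rewrite eq_sym (negbTE yv); case: (E x y).
Qed.

Lemma end_degree_edge_walks v : end_degree edge_walks v = degree t v.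
Proof.
rewrite /end_degree -map_comp sumnE big_map big_enum /=.
rewrite (eq_bigl [pred p : V * V | oriented_edge (p.1, p.2)]) => [|[]//].
rewrite (sum_pair_endpoints (fun x y => oriented_edge (x, y))) /degree -sum1dep_card.
rewrite [RHS]big_mkcond /=; apply: eq_bigr => y _.
case tvy: (t v y); last by rewrite /oriented_edge /= tvy t_sym tvy.
move: (oriented_edgeP tvy); rewrite /oriented_edge /= tvy t_sym tvy /=.
by case: ltngtP.
Qed.

End EdgeWalks.

Section TreePlusCycle.
Variable V : finType.
Variables e t : rel V.
Hypotheses (e_sym : symmetric e) (t_sub : subrel t e).
Hypotheses (t_sym : symmetric t) (t_irr : irreflexive t).
Hypotheses (t_conn : connected_graph t) (t_acyclic : forall c, ~ simple_cycle t c).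

Lemma size_edge_walks : 0 < #|V| -> 2 * size (edge_walks t) + 2 <= 2 * #|V|.
Proof.
move=> V0; rewrite -(sum_end_degree (edge_walks t)).
have := @forest_nbrs_sum V t t_sym t_irr t_acyclic [set: V].
rewrite -card_gt0 cardsT => /(_ V0); congr (_ + _ <= _).
rewrite (eq_bigl xpredT) => [|v]; last by rewrite inE.
apply: eq_bigr => v _; rewrite end_degree_edge_walks //.
by apply: eq_card => y; rewrite !inE.
Qed.

Lemma connected_nbr v : 1 < #|V| -> exists u, t v u.
Proof.
case/card_gt1P => a [b [_ _ ab]].
have [u uv] : exists u, u != v.
  by case: (eqVneq a v) => [<-|]; [exists b; rewrite eq_sym | exists a].
case/connectP: (t_conn v u) => [[|z p] /= pp lp]; first by rewrite lp eqxx in uv.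
by exists z; case/andP: pp.
Qed.

Lemma tree_cycle_tour c : 1 < #|V| -> simple_cycle e c ->
  (forall v, odd (degree t v) -> v \in c) ->
  exists x1 w, tsp_tour e x1 w /\ 2 * size w + 2 <= 2 * #|V| + size c.
Proof.
case: c => [|x0 r] V1 [// _ ur pc] odd_c.
have [J [pJ lenJ szJ parJ]] :=
  cycle_flip_edges (d := fun v => odd (degree t v)) pc ur odd_c.
pose L := edge_walks t ++ J.
have linkedL x y : t x y -> linked L x y.
  by move=> txy; rewrite /linked has_cat -/(linked _ x y) linked_edge_walks.
have coverL v : covered L v.
  have [u /linkedL] := connected_nbr v V1.
  by apply: sub_has => w /andP [].
have evenL v : ~~ odd (end_degree L v).
  have even_off_x0 u : u != x0 -> ~~ odd (end_degree L u).
    by move=> ux0; rewrite end_degree_cat end_degree_edge_walks // oddD parJ // addbb.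
  by case: (eqVneq v x0) => [->|]; [apply: end_degree_even_at | apply: even_off_x0].
have [||||x1 [w [pw lw sw cw]]] := @euler_closed_walk V e e_sym L.
- by apply/eqP => L0; move: (coverL x0); rewrite L0.
- by rewrite all_cat edge_walks_wpath.
- exact: evenL.
- by move=> x y _ _; apply: connect_sub (t_conn x y) => a b /linkedL/connect1.
exists x1, w; split; first by split => // v; apply: cw.
have := size_edge_walks (ltnW V1).
rewrite sw total_length_cat total_length_edge_walks lenJ; lia.
Qed.

End TreePlusCycle.

Theorem theorem1 (V : finType) (e : rel V) (t : rel V) (c : seq V) :
  simple_graph e ->
  two_vertex_connected e ->
  min_spanning_tree e t ->
  simple_cycle e c ->
  (forall v : V, odd (degree t v) -> v \in c) ->
  exists (x0 : V) (w : seq V), tsp_tour e x0 w /\ 3 * size w <= 4 * #|V|.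
Proof.
move=> [e_sym e_irr] [V3 [e_conn _]] [[t_sym t_sub t_conn t_acyclic] _] c_cycle odd_c.
have t_irr : irreflexive t by move=> x; apply/negbTE/negP => /t_sub; rewrite e_irr.
have [x0 [w [tour sz]]] := cycle_tour e_sym e_conn c_cycle.
have [x1 [w' [tour' sz']]] :=
  tree_cycle_tour e_sym t_sub t_sym t_irr t_conn t_acyclic (ltnW V3) c_cycle odd_c.
have [long|short] := leqP (2 * #|V|) (3 * size c).
  by exists x0, w; split => //; lia.
by exists x1, w'; split => //; lia.
Qed.
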